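(* Let $q=r^2$ with $r$ an odd prime power, $\theta$ a primitive element of $\mathbb{F}_q$, and $q-1=e_1f_1=e_2f_2$ with positive integers, where for some integer $l\geq 2$ we have $e_1\equiv 2^l\pmod{2^{l+1}}$ and $2^l\mid e_2$, and moreover $2e_2\mid e_1(r+1)$ and $e_1\mid e_2(r-1)$. Let $A=\langle\theta^{e_1}\rangle$, $B=\langle\theta^{e_2}\rangle$, $\beta=\theta^{e_2}$, $\gamma=\theta^{e_1/2}$, $D_1=\frac{e_1}{\gcd(e_1,e_2)}$, $D_2=\frac{e_2}{\gcd(e_1,e_2)}$. Let $1\leq s\leq D_1$, $1\leq t\leq D_2$, let $i_1,\dots,i_s$ be integers pairwise distinct modulo $D_1$ and $j_1,\dots,j_t$ integers pairwise distinct modulo $D_2$, and set $M=\bigcup_{\mu=1}^s\beta^{i_\mu}A$, $N=\bigcup_{\nu=1}^t\gamma^{2j_\nu+1}B$, $S=M\cup N$. Then $\eta(L_S(b))=(-1)^{\frac{te_1(r+1)}{2e_2}+\frac{t(r+1)}{2}}$ for every $b\in M$, and $\eta(L_S(b))=(-1)^{\frac{(t-1)(r+1)}{2}}$ for every $b\in N$.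
   Context: $\eta$ denotes the quadratic character of $\mathbb{F}_q^*$ ($\eta(x)=1$ if $x$ is a nonzero square, $-1$ otherwise). For a finite set $S\subseteq\mathbb{F}_q$ and $b\in S$, $L_S(b)=\prod_{c\in S,\,c\neq b}(b-c)$. $\langle x\rangle$ denotes the cyclic subgroup of $\mathbb{F}_q^*$ generated by $x$. *)

From HB Require Import structures.
From mathcomp Require Import all_boot all_order all_algebra all_field.
Set Implicit Arguments. Unset Strict Implicit. Unset Printing Implicit Defensive.
Import GRing.Theory Num.Theory.
Local Open Scope ring_scope.

Definition qchar (F : finFieldType) (x : F) : int :=
  if x == 0 then 0 else if [exists y : F, y ^+ 2 == x] then 1 else -1.

(* cyclic subgroup <x> of F^*, for x <> 0 : all powers x^k (period divides q-1) *)
Definition cyc (F : finFieldType) (x : F) : {set F} :=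
  [set x ^+ (nat_of_ord k) | k : 'I_#|F|].

Definition LS (F : finFieldType) (S : {set F}) (b : F) : F :=
  \prod_(c in S | c != b) (b - c).

Definition coset_mul (F : finFieldType) (c : F) (H : {set F}) : {set F} :=
  [set c * h | h in H].

(* By Euler's criterion it suffices to compute [L_S(b)^h] with [h = (q-1)/2 = (r-1)(r+1)/2].
   The cosets making up [S] are pairwise disjoint, so [L_S(b)] is the product of the
   Lagrange products over these cosets, and over a coset [cH] of a cyclic group of order [m]
   that product is [b^m - c^m] if [b] is outside [cH] and [m b^(m-1)] if [b] is inside.
   For the cosets of [A] and for the coset containing [b] these values are fixed by
   [x |-> x^r], i.e. lie in [F_r^*], and so have [h]-th power [1].  For the cosets of [B],
   [u = b^f2] and [w = c^f2] have norm [u^(r+1) = w^(r+1) = 1], whence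
   [(u - w)^h = (-1)^((r+1)/2) / (uw)^((r+1)/2)], and [(uw)^((r+1)/2)] is [1] for [b] in [N]
   and [(-1)^(e1(r+1)/(2e2))] for [b] in [M]. *)

From HB Require Import structures.
From mathcomp Require Import all_boot all_order all_algebra all_field.
From mathcomp Require Import zify ring.
Import GRing.Theory Num.Theory.
Local Open Scope ring_scope.
Set Implicit Arguments. Unset Strict Implicit.

Lemma half_sqrn_pred (r : nat) : odd r -> ((r ^ 2).-1./2 = r.-1 * r.+1./2)%N.
Proof.
move=> odd_r; have r_def : r = (r./2).*2.+1.
  by rewrite -[LHS]odd_double_half odd_r add1n.
have half_succ : r.+1./2 = (r./2).+1 by rewrite {1}r_def -[_.+2]/((r./2).+1).*2 doubleK.
have sqr_pred : (r ^ 2).-1 = (r.-1 * (r./2).+1).*2 by rewrite {1 2}r_def -!mul2n; nia.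
by rewrite half_succ sqr_pred doubleK.
Qed.

Lemma two_pow_odd_of_mod (e l : nat) :
  (e %% 2 ^ l.+1 = 2 ^ l)%N -> exists2 o, odd o & e = (2 ^ l * o)%N.
Proof.
move=> e_mod; exists (e %/ 2 ^ l.+1).*2.+1; first by rewrite /= odd_double.
by rewrite {1}(divn_eq e (2 ^ l.+1)) e_mod expnS mulnS -mul2n; ring.
Qed.

Lemma dvdz_divn_gcd (a b : nat) (d : int) :
  (0 < a)%N -> (a%:Z %| b%:Z * d)%Z -> ((a %/ gcdn a b)%N%:Z %| d)%Z.
Proof.
move=> a_gt0; set g := gcdn a b; have g_gt0 : (0 < g)%N by rewrite gcdn_gt0 a_gt0.
have coprime_ab : coprime (a %/ g) (b %/ g).
  by rewrite /coprime -(eqn_pmul2r g_gt0) mul1n muln_gcdl !divnK ?dvdn_gcdl ?dvdn_gcdr.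
have a_def : a = (a %/ g * g)%N by rewrite divnK ?dvdn_gcdl.
have b_def : b = (b %/ g * g)%N by rewrite divnK ?dvdn_gcdr.
rewrite {1}a_def {1}b_def !PoszM mulrAC dvdz_mul2r; last by rewrite -lt0n.
by rewrite Gauss_dvdzr.
Qed.

Lemma exprz_exprn (R : unitRingType) (x : R) (k : int) (m : nat) :
  (x ^ k) ^+ m = (x ^+ m) ^ k.
Proof. by rewrite !exprnP exprzAC. Qed.

Lemma exprz_odd_sqr1 (F : fieldType) (x : F) (k : int) :
  x ^+ 2 = 1 -> x ^ (2 * k + 1) = x.
Proof.
move=> x2; have x_neq0 : x != 0.
  by apply: contra_eq_neq x2 => ->; rewrite expr0n eq_sym oner_neq0.
by rewrite expfzDr // -exprz_exp -exprnP x2 exp1rz mul1r expr1z.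
Qed.

Lemma prim_root_exprz_eq1 (R : unitRingType) (n : nat) (z : R) (k : int) :
  n.-primitive_root z -> (z ^ k == 1) = (n %| k)%Z.
Proof.
move=> z_prim; case: k => m; first by rewrite -exprnP -(prim_order_dvd z_prim).
by rewrite /= invr_eq1 -(prim_order_dvd z_prim).
Qed.

Lemma prim_root_expr_factor (R : nzRingType) (n e f : nat) (z : R) :
  n.-primitive_root z -> n = (e * f)%N -> f.-primitive_root (z ^+ e).
Proof.
move=> z_prim n_ef; have f_gt0 : (0 < f)%N.
  by move: (prim_order_gt0 z_prim); rewrite n_ef muln_gt0 => /andP[].
have f_dvd_n : (f %| n)%N by rewrite n_ef dvdn_mull.
by have := dvdn_prim_root z_prim f_dvd_n; rewrite n_ef mulnK.
Qed.

Lemma prim_root_neq0 (R : nzRingType) (n : nat) (z : R) :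
  n.-primitive_root z -> z != 0.
Proof.
move=> z_prim; apply: contra_eq_neq (prim_expr_order z_prim) => ->.
by rewrite expr0n eqn0Ngt (prim_order_gt0 z_prim) eq_sym oner_neq0.
Qed.

Lemma prim_root_half (R : idomainType) (n : nat) (z : R) :
  n.-primitive_root z -> ~~ odd n -> z ^+ n./2 = -1.
Proof.
move=> z_prim n_even; have n_gt0 := prim_order_gt0 z_prim.
have n_half : n = (n./2).*2 by rewrite -[LHS]odd_double_half (negPf n_even).
have : (z ^+ n./2) ^+ 2 = 1 by rewrite -exprM muln2 -n_half prim_expr_order.
move/eqP; rewrite sqrf_eq1 => /orP[/eqP z_half|/eqP //].
have /dvdn_leq : (n %| n./2)%N by rewrite (prim_order_dvd z_prim) z_half.
lia.
Qed.

Lemma oppr1_neq1_prim_root (R : idomainType) (n : nat) (z : R) :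
  n.-primitive_root z -> ~~ odd n -> (-1 : R) != 1.
Proof.
move=> z_prim n_even; have n_gt0 := prim_order_gt0 z_prim.
apply/eqP => m1_eq1; have n_half : n = (n./2).*2.
  by rewrite -[LHS]odd_double_half (negPf n_even).
have /dvdn_leq : (n %| n./2)%N.
  by rewrite (prim_order_dvd z_prim) (prim_root_half z_prim n_even) m1_eq1.
lia.
Qed.

Lemma signr_odd_eq (R : nzRingType) (a b : nat) : (-1 : R) != 1 ->
  (-1) ^+ a = (-1) ^+ b :> R -> odd a = odd b.
Proof.
move=> m1_neq1; rewrite -signr_odd -[in RHS]signr_odd.
case: (odd a); case: (odd b); rewrite ?expr0 ?expr1 // => /eqP.
  by rewrite (negPf m1_neq1).
by rewrite eq_sym (negPf m1_neq1).
Qed.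

Lemma qchar_euler (F : finFieldType) (theta x : F) (E : nat) :
  (#|F|.-1).-primitive_root theta -> odd #|F| -> x != 0 ->
  x ^+ (#|F|.-1)./2 = (-1) ^+ E -> qchar x = (-1) ^+ E.
Proof.
set n := #|F|.-1 => theta_prim odd_F x_neq0 x_half.
have card_F : #|F| = n.+1 by rewrite /n prednK //; apply/card_gt0P; exists 0.
have n_even : ~~ odd n by move: odd_F; rewrite card_F.
have m1_neq1 := oppr1_neq1_prim_root theta_prim n_even.
have n_double : (n./2).*2 = n by rewrite -[RHS]odd_double_half (negPf n_even).
have unit_n (y : F) : y != 0 -> y ^+ n = 1.
  by move=> y_neq0; apply: (mulIf y_neq0); rewrite mul1r -exprSr -card_F expf_card.
have [k x_def] := prim_rootP theta_prim (unit_n x x_neq0).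
have odd_k : odd k = odd E.
  by apply: (signr_odd_eq m1_neq1); rewrite -x_half x_def exprAC prim_root_half.
rewrite /qchar (negPf x_neq0); case: ifP => [/existsP[y /eqP y2]|no_root].
  have y_neq0 : y != 0 by apply: contraNneq x_neq0 => y0; rewrite -y2 y0 expr0n.
  have /(signr_odd_eq m1_neq1) even_E : (-1) ^+ E = (-1) ^+ 0 :> F.
    by rewrite -x_half -y2 -exprM mul2n n_double unit_n.
  by rewrite -signr_odd even_E.
case: (boolP (odd E)) => [odd_E|even_E]; first by rewrite -signr_odd odd_E.
move/negbT: no_root; case/negP; apply/existsP; exists (theta ^+ k./2).
rewrite -exprM mulnC mul2n x_def; apply/eqP; congr (theta ^+ _).
by move: (odd_double_half k); rewrite odd_k (negPf even_E).
Qed.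

Lemma pchar_pnat_of_card (F : finFieldType) (p m k : nat) :
  prime p -> #|F| = (p ^ m)%N -> [pchar F].-nat (p ^ k)%N.
Proof.
move=> p_prime card_F; have p_char : p \in [pchar F] by exact: (card_finPcharP card_F p_prime).
by rewrite pnatX (eq_pnat _ (pcharf_eq p_char)) pnat_id ?orTb.
Qed.

Section FrobeniusFixed.
Variables (F : fieldType) (r : nat).
Hypothesis odd_r : odd r.

Lemma expr_half_fixed (x : F) : x != 0 -> x ^+ r = x -> x ^+ (r ^ 2).-1./2 = 1.
Proof.
move=> x_neq0 x_fixed; have r_gt0 : (0 < r)%N by case: (r) odd_r.
have x_pred : x ^+ r.-1 = 1.
  by apply: (mulIf x_neq0); rewrite mul1r -exprSr prednK.
by rewrite half_sqrn_pred // exprM x_pred expr1n.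
Qed.

Hypothesis pchar_r : [pchar F].-nat r.

Lemma natr_frob (m : nat) : (m%:R : F) ^+ r = m%:R.
Proof.
elim: m => [|m IHm]; first by rewrite expr0n; case: (r) odd_r.
by rewrite -addn1 natrD exprDn_pchar // IHm expr1n.
Qed.

(* [(u - w)^r = u^-1 - w^-1 = - (u - w) / (u w)], so [(u - w)^(r-1) u w = -1]. *)
Lemma expr_half_sub_norm1 (u w : F) : u ^+ r.+1 = 1 -> w ^+ r.+1 = 1 -> u != w ->
  (u - w) ^+ (r ^ 2).-1./2 * (u * w) ^+ r.+1./2 = (-1) ^+ r.+1./2.
Proof.
move=> u_norm w_norm u_neq_w.
have r_gt0 : (0 < r)%N by case: (r) odd_r.
have norm1_inv (y : F) : y ^+ r.+1 = 1 -> y ^+ r = y^-1.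
  move=> y_norm; have y_neq0 : y != 0.
    by apply: contra_eq_neq y_norm => ->; rewrite expr0n eq_sym oner_neq0.
  by apply: (mulIf y_neq0); rewrite -exprSr y_norm mulVf.
have u_neq0 : u != 0 by apply: contra_eq_neq u_norm => ->; rewrite expr0n eq_sym oner_neq0.
have w_neq0 : w != 0 by apply: contra_eq_neq w_norm => ->; rewrite expr0n eq_sym oner_neq0.
have d_neq0 : u - w != 0 by rewrite subr_eq0.
have d_frob : (u - w) ^+ r * (u * w) = - (u - w).
  rewrite exprDn_pchar // exprNn_pchar // !norm1_inv // mulrBl mulrA mulVf // mul1r.
  by rewrite mulrCA mulVf // mulr1 opprB.
have d_pred : (u - w) ^+ r.-1 * (u * w) = -1.
  apply: (mulIf d_neq0); rewrite mulN1r -d_frob -{2}(prednK r_gt0) exprSr; ring.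
by rewrite half_sqrn_pred // exprM -exprMn d_pred.
Qed.

End FrobeniusFixed.

Section CosetProducts.
Variables (F : fieldType) (m : nat) (z c : F).
Hypotheses (z_prim : m.-primitive_root z) (c_neq0 : c != 0).

Lemma coset_expr_inj : injective (fun k : 'I_m => c * z ^+ k).
Proof.
move=> k k' /(mulfI c_neq0) /eqP; rewrite (eq_prim_root_expr z_prim) !modn_small //.
by move=> /eqP /val_inj.
Qed.

Lemma prod_XsubC_coset : \prod_(k < m) ('X - (c * z ^+ k)%:P) = 'X^m - (c ^+ m)%:P.
Proof.
have m_gt0 := prim_order_gt0 z_prim.
rewrite -(big_map (fun k : 'I_m => c * z ^+ k) xpredT (fun x => 'X - x%:P)).
rewrite [RHS](@all_roots_prod_XsubC _ _ [seq c * z ^+ (nat_of_ord k) | k <- index_enum 'I_m]).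
- by rewrite (monicP (monicXnsubC _ m_gt0)) scale1r.
- by rewrite size_XnsubC // size_map /index_enum unlock -enumT size_enum_ord.
- apply/allP => _ /mapP[k _ ->]; rewrite rootE !hornerE.
  by rewrite exprMn exprAC (prim_expr_order z_prim) expr1n mulr1 subrr.
rewrite uniq_rootsE map_inj_uniq ?index_enum_uniq //; exact: coset_expr_inj.
Qed.

Lemma prod_sub_coset (b : F) : \prod_(k < m) (b - c * z ^+ k) = b ^+ m - c ^+ m.
Proof.
move: (congr1 (horner^~ b) prod_XsubC_coset); rewrite horner_prod.
by under eq_bigr do rewrite hornerXsubC; move=> ->; rewrite !hornerE.
Qed.

(* The derivative of ['X^m - c^m] at its root [b]. *)
Lemma prod_sub_coset_own (k : 'I_m) :
  \prod_(k' < m | k' != k) (c * z ^+ k - c * z ^+ k') = m%:R * (c * z ^+ k) ^+ m.-1.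
Proof.
have m_gt0 := prim_order_gt0 z_prim; set b := c * z ^+ k.
pose Q := \prod_(k' < m | k' != k) ('X - (c * z ^+ k')%:P).
have Q_mul : ('X - b%:P) * Q = 'X^m - (b ^+ m)%:P.
  have -> : b ^+ m = c ^+ m.
    by rewrite /b exprMn exprAC (prim_expr_order z_prim) expr1n mulr1.
  by rewrite -prod_XsubC_coset (bigD1 k).
have Q_sum : Q = \sum_(k' < m) 'X ^+ (m.-1 - k') * b%:P ^+ k'.
  by apply: (mulfI (negbT (polyXsubC_eq0 b))); rewrite Q_mul -subrXX rmorphXn.
have <- : Q.[b] = \prod_(k' < m | k' != k) (b - c * z ^+ k').
  by rewrite horner_prod; apply: eq_bigr => k' _; rewrite hornerXsubC.
rewrite Q_sum horner_sum (eq_bigr (fun _ => b ^+ m.-1)); last first.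
  by move=> k' _; rewrite hornerM hornerXn horner_exp hornerC -exprD subnK // -ltnS prednK.
by rewrite sumr_const card_ord mulr_natl.
Qed.

End CosetProducts.

Section LagrangeProducts.
Variable F : finFieldType.
Implicit Types (S T : {set F}) (b : F).

Lemma LS_neq0 S b : LS S b != 0.
Proof. by apply/prodf_neq0 => x /andP[_ x_neq_b]; rewrite subr_eq0 eq_sym. Qed.

Lemma LS_setU S T b : [disjoint S & T] -> LS (S :|: T) b = LS S b * LS T b.
Proof.
move=> disj_ST; rewrite /LS !big_mkcondr -bigU //=.
by apply: eq_bigl => x; rewrite inE.
Qed.

Lemma LS_bigcup (I : finType) (S_ : I -> {set F}) b :
  (forall i j, i != j -> [disjoint S_ i & S_ j]) ->
  LS (\bigcup_i S_ i) b = \prod_i LS (S_ i) b.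
Proof.
move=> disj_S; rewrite /LS big_mkcondr partition_disjoint_bigcup //.
by apply: eq_bigr => i _; rewrite big_mkcondr.
Qed.

Lemma coset_mul_cycP (c z b : F) :
  b \in coset_mul c (cyc z) -> exists k : nat, b = c * z ^+ k.
Proof. by case/imsetP => _ /imsetP[k _ ->] ->; exists k. Qed.

Variables (m : nat) (z c : F).
Hypotheses (z_prim : m.-primitive_root z) (c_neq0 : c != 0).

Lemma coset_mul_cycE : coset_mul c (cyc z) = [set c * z ^+ k | k : 'I_m].
Proof.
have m_gt0 := prim_order_gt0 z_prim.
have m_le_F : (m <= #|F|)%N.
  by rewrite -[m]card_ord -(card_imset _ (coset_expr_inj z_prim (oner_neq0 F))) max_card.
apply/setP => x; apply/imsetP/imsetP => [[_ /imsetP[k _ ->] ->]|[k _ ->]].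
  by exists (Ordinal (ltn_pmod k m_gt0)); rewrite //= (prim_expr_mod z_prim).
by exists (z ^+ k) => //; apply/imsetP; exists (widen_ord m_le_F k).
Qed.

Lemma LS_coset_out b :
  b \notin coset_mul c (cyc z) -> LS (coset_mul c (cyc z)) b = b ^+ m - c ^+ m.
Proof.
rewrite coset_mul_cycE => b_notin; rewrite -(prod_sub_coset z_prim c_neq0) /LS.
rewrite big_mkcondr big_imset /=; last by move=> k k' _ _; apply: coset_expr_inj.
apply: eq_bigr => k _; rewrite ifT //; apply: contraNneq b_notin => <-.
exact: imset_f.
Qed.

Lemma LS_coset_in b :
  b \in coset_mul c (cyc z) -> LS (coset_mul c (cyc z)) b = m%:R * b ^+ m.-1.
Proof.
rewrite coset_mul_cycE => /imsetP[k _ ->].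
rewrite -(prod_sub_coset_own z_prim c_neq0) /LS big_mkcondr [RHS]big_mkcond.
rewrite big_imset /=; last by move=> k1 k2 _ _; apply: coset_expr_inj.
by apply: eq_bigr => k' _; rewrite (inj_eq (coset_expr_inj z_prim c_neq0)).
Qed.

End LagrangeProducts.

Lemma coset_mul_cyc_exprP (F : finFieldType) (c z b : F) :
  b \in coset_mul c (cyc z) -> exists a : nat, forall m, b ^+ m = c ^+ m * (z ^+ m) ^+ a.
Proof. by case/coset_mul_cycP => a ->; exists a => m; rewrite exprMn exprAC. Qed.

Lemma coset_mul_prim_dvd (F : finFieldType) (n e f : nat) (theta x : F) (a a' : int) :
  n.-primitive_root theta -> n = (e * f)%N ->
  x \in coset_mul (theta ^ a) (cyc (theta ^+ e)) ->
  x \in coset_mul (theta ^ a') (cyc (theta ^+ e)) -> (e %| a - a')%Z.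
Proof.
move=> theta_prim n_ef /coset_mul_cyc_exprP[k x_k] /coset_mul_cyc_exprP[k' x_k'].
have f_gt0 : (0 < f)%N by move: (prim_order_gt0 theta_prim); rewrite n_ef muln_gt0 => /andP[].
have ef_1 : (theta ^+ e) ^+ f = 1 by rewrite -exprM -n_ef prim_expr_order.
have theta_neq0 := prim_root_neq0 theta_prim.
have x_f : x ^+ f = theta ^ (a * f%:Z).
  by rewrite x_k ef_1 expr1n mulr1 exprnP exprz_exp.
have x_f' : x ^+ f = theta ^ (a' * f%:Z).
  by rewrite x_k' ef_1 expr1n mulr1 exprnP exprz_exp.
have /eqP : theta ^ ((a - a') * f%:Z) = 1.
  by rewrite mulrBl expfzDr // -invr_expz -x_f -x_f' mulfV // x_f expfz_neq0.
rewrite (prim_root_exprz_eq1 _ theta_prim) n_ef PoszM dvdz_mul2r //.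
by rewrite -lt0n.
Qed.

Section FrobeniusCosets.
Variables (F : finFieldType) (r : nat).
Hypotheses (odd_r : odd r) (pchar_r : [pchar F].-nat r).
Local Notation h := (r ^ 2).-1./2.
Variables (m : nat) (z c : F).
Hypotheses (z_prim : m.-primitive_root z) (c_neq0 : c != 0).
Local Notation C := (coset_mul c (cyc z)).

(* [m%:R] lies in the prime field, and is nonzero because [LS C b] is. *)
Lemma LS_coset_in_half (b : F) : b \in C -> b ^+ h = 1 -> LS C b ^+ h = 1.
Proof.
move=> b_in b_half; have := LS_neq0 C b; rewrite (LS_coset_in z_prim c_neq0 b_in).
rewrite mulf_eq0 negb_or => /andP[m_neq0 _].
by rewrite exprMn expr_half_fixed ?natr_frob // -exprM mulnC exprM b_half expr1n mulr1.
Qed.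

Lemma LS_coset_out_fixed_half (b : F) : b \notin C ->
  (b ^+ m) ^+ r = b ^+ m -> (c ^+ m) ^+ r = c ^+ m -> LS C b ^+ h = 1.
Proof.
move=> b_notin b_fixed c_fixed; have := LS_neq0 C b.
rewrite (LS_coset_out z_prim c_neq0 b_notin) => d_neq0.
by rewrite expr_half_fixed // exprDn_pchar // exprNn_pchar // b_fixed c_fixed.
Qed.

Lemma LS_coset_out_norm1_half (b : F) : b \notin C ->
  (b ^+ m) ^+ r.+1 = 1 -> (c ^+ m) ^+ r.+1 = 1 ->
  LS C b ^+ h * (b ^+ m * c ^+ m) ^+ r.+1./2 = (-1) ^+ r.+1./2.
Proof.
move=> b_notin b_norm c_norm; have := LS_neq0 C b.
rewrite (LS_coset_out z_prim c_neq0 b_notin) subr_eq0 => b_neq_c.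
exact: expr_half_sub_norm1.
Qed.

End FrobeniusCosets.

Section Theorem7.
Variables (F : finFieldType) (r : nat) (theta : F) (e1 f1 e2 f2 l : nat).
Local Notation n := #|F|.-1.
Local Notation h := n./2.
Hypotheses (odd_r : odd r) (pchar_r : [pchar F].-nat r) (card_F : #|F| = (r ^ 2)%N).
Hypothesis theta_prim : n.-primitive_root theta.
Hypotheses (e1f1 : n = (e1 * f1)%N) (e2f2 : n = (e2 * f2)%N).
Hypotheses (l_ge2 : (2 <= l)%N) (e1_mod : (e1 %% 2 ^ l.+1 = 2 ^ l)%N).
Hypothesis two_pow_dvd_e2 : (2 ^ l %| e2)%N.
Hypotheses (e2_dvd : (2 * e2 %| e1 * (r + 1))%N) (e1_dvd : (e1 %| e2 * (r - 1))%N).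

(* For [b] in [S], [b^f1] lies in [+-<rho>], a subgroup of [F_r^*], and [b^f2] in the
   norm-one group [<sigma>]. *)
Local Notation beta := (theta ^+ e2).
Local Notation gamma := (theta ^+ (e1 %/ 2)).
Local Notation rho := (theta ^+ (e2 * f1)).
Local Notation sigma := (theta ^+ (e1 %/ 2 * f2)).
Local Notation hr := ((r + 1) %/ 2)%N.
Local Notation E := (e1 * (r + 1) %/ (2 * e2))%N.
Local Notation Mcoset k := (coset_mul (beta ^ k) (cyc (theta ^+ e1))).
Local Notation Ncoset k := (coset_mul (gamma ^ (2 * k + 1)) (cyc (theta ^+ e2))).

Lemma e1_odd_part : exists2 o, odd o & e1 = (2 ^ l * o)%N.
Proof. exact: two_pow_odd_of_mod. Qed.

Lemma four_dvd_e1 : (4 %| e1)%N.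
Proof.
have [o _ ->] := e1_odd_part; apply: dvdn_mulr.
by rewrite -(subnKC l_ge2) expnD dvdn_mulr.
Qed.

Lemma two_dvd_e2 : (2 %| e2)%N.
Proof. by apply: dvdn_trans two_pow_dvd_e2; rewrite -(subnKC l_ge2) expnD dvdn_mulr. Qed.

Lemma n_gt0 : (0 < n)%N.
Proof. exact: prim_order_gt0 theta_prim. Qed.

Lemma half_e1f1 : h = (e1 %/ 2 * f1)%N.
Proof.
rewrite e1f1; have [u ->] := dvdnP four_dvd_e1; rewrite -!divn2.
have -> : (u * 4 * f1 = u * 2 * f1 * 2)%N by ring.
by rewrite -[4%N]/(2 * 2)%N mulnA !mulnK.
Qed.

Lemma n_double : n = (h * 2)%N.
Proof.
by rewrite half_e1f1 e1f1 mulnAC divnK // (dvdn_trans _ four_dvd_e1).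
Qed.

Lemma n_even : ~~ odd n.
Proof. by rewrite {1}n_double oddM andbF. Qed.

Lemma theta_expr_dvd k : (n %| k)%N -> theta ^+ k = 1.
Proof. by rewrite (prim_order_dvd theta_prim) => /eqP. Qed.

Lemma theta_expr_half k : theta ^+ (h * k) = (-1) ^+ k.
Proof. by rewrite exprM prim_root_half // n_even. Qed.

Lemma theta_half_dvd e : (2 %| e)%N -> (theta ^+ e) ^+ h = 1.
Proof.
move=> two_dvd_e; have h_gt0 : (0 < h)%N.
  by move: n_gt0; rewrite {1}n_double muln_gt0 => /andP[].
by rewrite -exprM theta_expr_dvd // {1}n_double [(e * h)%N]mulnC dvdn_pmul2l.
Qed.

Lemma rho_frob : rho ^+ r = rho.
Proof.
have [w e2r] := dvdnP e1_dvd; have r_gt0 : (0 < r)%N by case: (r) odd_r.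
have r_split : r = (r - 1 + 1)%N by rewrite subnK.
rewrite -exprM; have -> : (e2 * f1 * r = n * w + e2 * f1)%N.
  by rewrite e1f1 {1}r_split mulnDr muln1 (mulnAC e2) e2r; ring.
by rewrite exprD exprM (prim_expr_order theta_prim) expr1n mul1r.
Qed.

Lemma sigma_half_r : sigma ^+ hr = (-1) ^+ E.
Proof.
have [a e1_def] := dvdnP (dvdn_trans (isT : (2 %| 4)%N) four_dvd_e1).
have r1_def : (r + 1 = hr * 2)%N by rewrite divnK // addn1 dvdn2 /= odd_r.
have e2_gt0 : (0 < e2)%N by move: n_gt0; rewrite e2f2 muln_gt0 => /andP[].
have e2E : (e2 * E = a * hr * 2)%N.
  apply/eqP; rewrite -(eqn_pmul2l (isT : (0 < 2)%N)) mulnA [(2 * e2 * _)%N]mulnC divnK //.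
  by rewrite e1_def {1}r1_def; apply/eqP; ring.
rewrite -exprM -theta_expr_half; congr (theta ^+ _).
have -> : (e1 %/ 2 = a)%N by rewrite e1_def mulnK.
apply/eqP; rewrite -(eqn_pmul2l e2_gt0); apply/eqP.
rewrite [RHS]mulnCA e2E.
have -> : (e2 * (a * f2 * hr) = a * hr * (e2 * f2))%N by ring.
by rewrite -e2f2 {1}n_double; ring.
Qed.

Lemma sigma_norm : sigma ^+ r.+1 = 1.
Proof.
have -> : r.+1 = (hr * 2)%N by rewrite -addn1 divnK // addn1 dvdn2 /= odd_r.
by rewrite exprM sigma_half_r -exprM mulnC exprM sqrrN expr1n expr1n.
Qed.

Lemma two_dvd_half_e1 : (2 %| e1 %/ 2)%N.
Proof.
by have [u ->] := dvdnP four_dvd_e1; rewrite -[4%N]/(2 * 2)%N mulnA mulnK ?dvdn_mull.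
Qed.

Lemma beta_f2 : beta ^+ f2 = 1.
Proof. by rewrite -exprM -e2f2 (prim_expr_order theta_prim). Qed.

Lemma gamma_f1 : gamma ^+ f1 = -1.
Proof. by rewrite -exprM -half_e1f1 -[h]muln1 theta_expr_half. Qed.

Lemma Mcoset_half k b : b \in Mcoset k -> b ^+ h = 1.
Proof.
case/coset_mul_cyc_exprP => a ->; rewrite exprz_exprn !theta_half_dvd ?two_dvd_e2 //.
  by rewrite exp1rz expr1n mulr1.
exact: dvdn_trans four_dvd_e1.
Qed.

Lemma Ncoset_half k b : b \in Ncoset k -> b ^+ h = 1.
Proof.
case/coset_mul_cyc_exprP => a ->.
by rewrite exprz_exprn !theta_half_dvd ?two_dvd_e2 ?two_dvd_half_e1 // exp1rz expr1n mulr1.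
Qed.

Lemma Mcoset_f1 k b : b \in Mcoset k -> b ^+ f1 = rho ^ k.
Proof.
case/coset_mul_cyc_exprP => a ->.
by rewrite exprz_exprn -!exprM mulnA -e1f1 theta_expr_dvd ?mulr1 ?dvdn_mulr.
Qed.

Lemma Mcoset_f2 k b : b \in Mcoset k -> exists a : nat, b ^+ f2 = (sigma ^+ 2) ^+ a.
Proof.
case/coset_mul_cyc_exprP => a ->; exists a.
rewrite exprz_exprn beta_f2 exp1rz mul1r; congr (_ ^+ a); rewrite -!exprM.
by rewrite mulnAC divnK // (dvdn_trans _ four_dvd_e1).
Qed.

Lemma Ncoset_f2 k b : b \in Ncoset k -> b ^+ f2 = sigma ^ (2 * k + 1).
Proof.
case/coset_mul_cyc_exprP => a ->.
by rewrite exprz_exprn -!exprM mulnA -e2f2 theta_expr_dvd ?mulr1 ?dvdn_mulr.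
Qed.

Lemma Ncoset_f1 k b : b \in Ncoset k -> exists a : nat, b ^+ f1 = - rho ^+ a.
Proof.
case/coset_mul_cyc_exprP => a ->; exists a.
by rewrite exprz_exprn gamma_f1 exprz_odd_sqr1 ?sqrrN ?expr1n // mulN1r -[beta ^+ f1]exprM.
Qed.

Lemma e1_gt0 : (0 < e1)%N.
Proof. by move: n_gt0; rewrite e1f1 muln_gt0 => /andP[]. Qed.

Lemma e2_gt0 : (0 < e2)%N.
Proof. by move: n_gt0; rewrite e2f2 muln_gt0 => /andP[]. Qed.

Lemma Mcoset_dvd k k' x : x \in Mcoset k -> x \in Mcoset k' ->
  ((e1 %/ gcdn e1 e2)%N%:Z %| k - k')%Z.
Proof.
have beta_z (k0 : int) : beta ^ k0 = theta ^ (e2%:Z * k0) by rewrite exprnP exprz_exp.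
rewrite !beta_z => x_k x_k'; apply: dvdz_divn_gcd e1_gt0 _.
by rewrite mulrBr; apply: (coset_mul_prim_dvd theta_prim e1f1 x_k x_k').
Qed.

Lemma Ncoset_dvd k k' x : x \in Ncoset k -> x \in Ncoset k' ->
  ((e2 %/ gcdn e1 e2)%N%:Z %| k - k')%Z.
Proof.
have gamma_z (k0 : int) : gamma ^ (2 * k0 + 1) = theta ^ ((e1 %/ 2)%N%:Z * (2 * k0 + 1)).
  by rewrite exprnP exprz_exp.
rewrite !gamma_z gcdnC => x_k x_k'; apply: dvdz_divn_gcd e2_gt0 _.
have := coset_mul_prim_dvd theta_prim e2f2 x_k x_k'.
rewrite -mulrBr opprD addrACA subrr addr0 -mulrBr mulrA -PoszM.
by rewrite divnK // (dvdn_trans _ four_dvd_e1).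
Qed.

(* With [P = n / 2^l], [x^P = 1] on the [M]-cosets and [x^P = -1] on the [N]-cosets. *)
Lemma Mcoset_notin_Ncoset k k' x : x \in Mcoset k -> x \notin Ncoset k'.
Proof.
have [o odd_o e1_def] := e1_odd_part.
have beta_P : beta ^+ (o * f1) = 1.
  have [u ->] := dvdnP two_pow_dvd_e2.
  by rewrite -exprM theta_expr_dvd // e1f1 e1_def -!mulnA dvdn_mull.
have A_P : (theta ^+ e1) ^+ (o * f1) = 1.
  by rewrite -exprM theta_expr_dvd // e1f1 mulnCA dvdn_mull.
have gamma_P : gamma ^+ (o * f1) = -1.
  by rewrite -exprM mulnCA -half_e1f1 mulnC theta_expr_half -signr_odd odd_o expr1.
move=> /coset_mul_cyc_exprP[a x_M]; apply/negP => /coset_mul_cyc_exprP[a' x_N].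
move: (x_N (o * f1)%N); rewrite x_M !exprz_exprn beta_P A_P gamma_P.
rewrite exprz_odd_sqr1 ?sqrrN ?expr1n // exp1rz mulr1 mulN1r => /eqP.
by rewrite eq_sym (negPf (oppr1_neq1_prim_root theta_prim n_even)).
Qed.

Lemma half_card : h = (r ^ 2).-1./2.
Proof. by rewrite card_F. Qed.

Lemma half_succ_r : r.+1./2 = hr.
Proof. by rewrite -divn2 addn1. Qed.

Lemma sigma_half_r_sqr : (sigma ^+ hr) ^+ 2 = 1.
Proof. by rewrite sigma_half_r -exprM mulnC exprM sqrrN !expr1n. Qed.

Lemma beta_exprz_neq0 k : beta ^ k != 0.
Proof. by rewrite expfz_neq0 // expf_neq0 // (prim_root_neq0 theta_prim). Qed.

Lemma gamma_exprz_neq0 k : gamma ^ k != 0.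
Proof. by rewrite expfz_neq0 // expf_neq0 // (prim_root_neq0 theta_prim). Qed.

Lemma A_prim : f1.-primitive_root (theta ^+ e1).
Proof. exact: prim_root_expr_factor theta_prim e1f1. Qed.

Lemma B_prim : f2.-primitive_root (theta ^+ e2).
Proof. exact: prim_root_expr_factor theta_prim e2f2. Qed.

Lemma LS_Mcoset_of_M k k' b : b \in Mcoset k -> LS (Mcoset k') b ^+ h = 1.
Proof.
move=> b_in; have c_neq0 := beta_exprz_neq0 k'.
rewrite half_card; case: (boolP (b \in Mcoset k')) => [b_in'|b_out].
  rewrite (LS_coset_in_half odd_r pchar_r A_prim c_neq0 b_in') //.
  by rewrite -half_card (Mcoset_half b_in').
rewrite (LS_coset_out_fixed_half odd_r pchar_r A_prim c_neq0 b_out) //.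
  by rewrite (Mcoset_f1 b_in) exprz_exprn rho_frob.
by rewrite exprz_exprn -exprM exprz_exprn rho_frob.
Qed.

Lemma LS_Mcoset_of_N k k' b : b \in Ncoset k -> LS (Mcoset k') b ^+ h = 1.
Proof.
move=> b_in; have c_neq0 := beta_exprz_neq0 k'.
have b_out : b \notin Mcoset k'.
  by apply: contraL b_in => b_in'; exact: (@Mcoset_notin_Ncoset k' k b b_in').
have [a b_f1] := Ncoset_f1 b_in.
rewrite half_card (LS_coset_out_fixed_half odd_r pchar_r A_prim c_neq0 b_out) //.
  by rewrite b_f1 exprNn_pchar // (exprAC rho) rho_frob.
by rewrite exprz_exprn -exprM exprz_exprn rho_frob.
Qed.

Lemma LS_Ncoset_of_M k k' b : b \in Mcoset k -> LS (Ncoset k') b ^+ h = (-1) ^+ (hr + E).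
Proof.
move=> b_in; have c_neq0 := gamma_exprz_neq0 (2 * k' + 1).
have b_out := Mcoset_notin_Ncoset k' b_in.
have [a b_f2] := Mcoset_f2 b_in.
have c_f2 : (gamma ^ (2 * k' + 1)) ^+ f2 = sigma ^ (2 * k' + 1).
  by rewrite exprz_exprn -exprM.
have b_norm : (b ^+ f2) ^+ r.+1 = 1.
  by rewrite b_f2 (exprAC (sigma ^+ 2)) (exprAC sigma) sigma_norm !expr1n.
have c_norm : ((gamma ^ (2 * k' + 1)) ^+ f2) ^+ r.+1 = 1.
  by rewrite c_f2 exprz_exprn sigma_norm exp1rz.
have bc_half : (b ^+ f2 * (gamma ^ (2 * k' + 1)) ^+ f2) ^+ hr = (-1) ^+ E.
  rewrite b_f2 c_f2 exprMn (exprAC (sigma ^+ 2)) (exprAC sigma) sigma_half_r_sqr.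
  by rewrite expr1n mul1r exprz_exprn exprz_odd_sqr1 ?sigma_half_r_sqr // sigma_half_r.
have := LS_coset_out_norm1_half odd_r pchar_r B_prim c_neq0 b_out b_norm c_norm.
rewrite -half_card half_succ_r bc_half exprD => <-.
by rewrite -mulrA -expr2 -exprM mulnC exprM sqrrN !expr1n mulr1.
Qed.

Lemma LS_Ncoset_of_N k k' b : b \in Ncoset k -> b \notin Ncoset k' ->
  LS (Ncoset k') b ^+ h = (-1) ^+ hr.
Proof.
move=> b_in b_out; have c_neq0 := gamma_exprz_neq0 (2 * k' + 1).
have c_f2 : (gamma ^ (2 * k' + 1)) ^+ f2 = sigma ^ (2 * k' + 1).
  by rewrite exprz_exprn -exprM.
have sigma_odd_norm (k0 : int) : (sigma ^ (2 * k0 + 1)) ^+ r.+1 = 1.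
  by rewrite exprz_exprn sigma_norm exp1rz.
have := LS_coset_out_norm1_half odd_r pchar_r B_prim c_neq0 b_out.
have bc_half : (sigma ^ (2 * k + 1) * sigma ^ (2 * k' + 1)) ^+ hr = 1.
  rewrite exprMn !exprz_exprn !exprz_odd_sqr1 ?sigma_half_r_sqr //.
  by rewrite -expr2 sigma_half_r_sqr.
rewrite (Ncoset_f2 b_in) c_f2 !sigma_odd_norm -half_card half_succ_r bc_half mulr1.
by move=> /(_ erefl erefl).
Qed.

Lemma LS_Ncoset_own k b : b \in Ncoset k -> LS (Ncoset k) b ^+ h = 1.
Proof.
move=> b_in; have c_neq0 := gamma_exprz_neq0 (2 * k + 1).
rewrite half_card (LS_coset_in_half odd_r pchar_r B_prim c_neq0 b_in) //.
by rewrite -half_card (Ncoset_half b_in).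
Qed.

Variables (s t : nat) (i : 'I_s -> int) (j : 'I_t -> int).
Hypothesis i_inj : injective (fun mu => (i mu %% (e1 %/ gcdn e1 e2)%N%:Z)%Z).
Hypothesis j_inj : injective (fun nu => (j nu %% (e2 %/ gcdn e1 e2)%N%:Z)%Z).
Local Notation M := (\bigcup_(mu < s) Mcoset (i mu)).
Local Notation N := (\bigcup_(nu < t) Ncoset (j nu)).

Lemma Mcosets_disjoint mu mu' : mu != mu' -> [disjoint Mcoset (i mu) & Mcoset (i mu')].
Proof.
move=> mu_neq; rewrite -setI_eq0; apply/set0Pn => -[x /setIP[x_in x_in']].
case/eqP: mu_neq; apply: i_inj => /=.
by apply/eqP; rewrite eqz_mod_dvd; exact: Mcoset_dvd x_in x_in'.
Qed.

Lemma Ncosets_disjoint nu nu' : nu != nu' -> [disjoint Ncoset (j nu) & Ncoset (j nu')].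
Proof.
move=> nu_neq; rewrite -setI_eq0; apply/set0Pn => -[x /setIP[x_in x_in']].
case/eqP: nu_neq; apply: j_inj => /=.
by apply/eqP; rewrite eqz_mod_dvd; exact: Ncoset_dvd x_in x_in'.
Qed.

Lemma M_N_disjoint : [disjoint M & N].
Proof.
rewrite -setI_eq0; apply/set0Pn => -[x /setIP[/bigcupP[mu _ x_M] /bigcupP[nu _ x_N]]].
by move: x_N; apply/negP; exact: Mcoset_notin_Ncoset x_M.
Qed.

Lemma LS_MN b :
  LS (M :|: N) b = \prod_(mu < s) LS (Mcoset (i mu)) b * \prod_(nu < t) LS (Ncoset (j nu)) b.
Proof.
rewrite LS_setU ?M_N_disjoint //.
by rewrite (LS_bigcup b Mcosets_disjoint) (LS_bigcup b Ncosets_disjoint).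
Qed.

Lemma LS_MN_half_of_M b : b \in M -> LS (M :|: N) b ^+ h = (-1) ^+ (t * E + t * hr).
Proof.
case/bigcupP => mu _ b_in.
rewrite LS_MN exprMn -!prodrXl big1 => [|mu' _]; last exact: LS_Mcoset_of_M b_in.
rewrite mul1r (eq_bigr _ (fun nu _ => LS_Ncoset_of_M (j nu) b_in)) prodr_const card_ord.
by rewrite -exprM mulnC mulnDr addnC.
Qed.

Lemma LS_MN_half_of_N b : b \in N -> LS (M :|: N) b ^+ h = (-1) ^+ ((t - 1) * hr).
Proof.
case/bigcupP => nu _ b_in.
rewrite LS_MN exprMn -!prodrXl big1 => [|mu _]; last exact: LS_Mcoset_of_N b_in.
rewrite mul1r (bigD1 nu) //= LS_Ncoset_own // mul1r.
rewrite (eq_bigr (fun _ => (-1) ^+ hr)) => [|nu' nu'_neq]; last first.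
  apply: (LS_Ncoset_of_N b_in).
  by rewrite (disjointFr (Ncosets_disjoint _) b_in) // eq_sym.
by rewrite prodr_const cardC1 card_ord -exprM mulnC subn1.
Qed.

End Theorem7.

Theorem mainTheorem7 (F : finFieldType) (r : nat) (theta : F)
  (e1 f1 e2 f2 l s t : nat) (i : 'I_s -> int) (j : 'I_t -> int) :
  (exists p k : nat, [/\ prime p, (0 < k)%N & r = p ^ k]%N) ->
  odd r ->
  #|F| = (r ^ 2)%N ->
  (#|F|.-1).-primitive_root theta ->
  (0 < e1)%N -> (0 < f1)%N -> (0 < e2)%N -> (0 < f2)%N ->
  #|F|.-1 = (e1 * f1)%N -> #|F|.-1 = (e2 * f2)%N ->
  (2 <= l)%N ->
  (e1 %% 2 ^ l.+1 = 2 ^ l)%N ->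
  (2 ^ l %| e2)%N ->
  (2 * e2 %| e1 * (r + 1))%N ->
  (e1 %| e2 * (r - 1))%N ->
  let A := cyc (theta ^+ e1) in
  let B := cyc (theta ^+ e2) in
  let beta := theta ^+ e2 in
  let gamma := theta ^+ (e1 %/ 2) in
  let D1 := (e1 %/ gcdn e1 e2)%N in
  let D2 := (e2 %/ gcdn e1 e2)%N in
  (1 <= s <= D1)%N -> (1 <= t <= D2)%N ->
  injective (fun mu => (i mu %% D1%:Z)%Z) ->
  injective (fun nu => (j nu %% D2%:Z)%Z) ->
  let M := \bigcup_(mu < s) coset_mul (beta ^ i mu) A in
  let N := \bigcup_(nu < t) coset_mul (gamma ^ (2 * j nu + 1)) B in
  let S := M :|: N in
  (forall b, b \in M ->
     qchar (LS S b) = (-1) ^+ (t * (e1 * (r + 1) %/ (2 * e2)) + t * ((r + 1) %/ 2))%N)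
  /\
  (forall b, b \in N ->
     qchar (LS S b) = (-1) ^+ ((t - 1) * ((r + 1) %/ 2))%N).
Proof.
move=> [p [k [p_prime _ r_def]]] odd_r card_F theta_prim _ _ _ _ e1f1 e2f2 l_ge2 e1_mod
  two_pow_dvd_e2 e2_dvd e1_dvd A B beta gamma D1 D2 _ _ i_inj j_inj M N S.
have pchar_r : [pchar F].-nat r.
  have card_pk : #|F| = (p ^ (k * 2))%N by rewrite card_F r_def expnM.
  by rewrite r_def; exact: pchar_pnat_of_card p_prime card_pk.
have odd_F : odd #|F| by rewrite card_F oddX odd_r orbT.
split=> b b_in; apply: (qchar_euler theta_prim odd_F (LS_neq0 _ _)).
  exact: (LS_MN_half_of_M odd_r pchar_r card_F theta_prim e1f1 e2f2 l_ge2 e1_mod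
    two_pow_dvd_e2 e2_dvd e1_dvd i_inj j_inj b_in).
exact: (LS_MN_half_of_N odd_r pchar_r card_F theta_prim e1f1 e2f2 l_ge2 e1_mod
  two_pow_dvd_e2 e2_dvd e1_dvd i_inj j_inj b_in).
Qed.
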